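(* Let $\mathcal{P}=\{P_1,\ldots,P_n\}$, let $\mathcal{Q}\subseteq 2^{\mathcal{P}}$ and let $\mathcal{F}\subseteq 2^{\mathcal{P}}$ be a fail-prone system. Consider the ideal $I=\langle \xi_{\mathcal{Q}_{\bar X}},\ \xi_{\mathcal{Q}_{\bar Y}},\ \sigma\rangle\subseteq \mathbb{B}(\bar X,\bar Y)$ and let $\mathcal{G}$ be a Gröbner basis for $I$. If $|SM(\mathcal{G})|=|\mathcal{Q}|^2$, then $\mathcal{Q}$ fulfills (classical) consistency, i.e. $Q_1\cap Q_2\neq\emptyset$ for all $Q_1,Q_2\in\mathcal{Q}$.
   Context: $\mathbb{B}=\mathbb{F}_2$ and $\mathbb{B}(X_1,\ldots,X_n,Y_1,\ldots,Y_n)=\mathbb{B}[\bar X,\bar Y]/\langle X_i^2-X_i, Y_i^2-Y_i\ (1\le i\le n)\rangle$ is the Boolean polynomial ring; $\bar X=\{X_1,\ldots,X_n\}$, $\bar Y=\{Y_1,\ldots,Y_n\}$. The map $\varphi:2^{\mathcal{P}}\to\mathbb{B}^n$ sends $S$ to its indicator vector ($\varphi(S)_i=1$ iff $P_i\in S$); $\varphi(\mathcal{A})=\{\varphi(A):A\in\mathcal{A}\}$. For $S\subseteq\mathcal{P}$ the characteristic polynomial is $\xi_S(Z_1,\ldots,Z_n)=\prod_{i=1}^n(1+Z_i+\varphi(S)_i)$, and for $\mathcal{A}\subseteq 2^{\mathcal{P}}$ and a block of variables $\bar Z$, $\xi_{\mathcal{A}_{\bar Z}}=\prod_{A\in\mathcal{A}}(\xi_A(\bar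 Z)+1)$. $\sigma(\bar X,\bar Y)=\prod_{i=1}^n(X_iY_i+1)$. A fail-prone system is a collection of subsets of $\mathcal{P}$ none of which is contained in another. Monomials are ordered by the lexicographic order with $\bar Y<\bar X$ as blocks and $X_n\prec\cdots\prec X_1$, $Y_n\prec\cdots\prec Y_1$ within blocks. $LM(f)$ is the largest monomial of $f$. A Gröbner basis of $I$ is a generating set $\mathcal{G}$ of $I$ such that for every nonzero $f\in I$ some $g\in\mathcal{G}$ has $LM(g)\mid LM(f)$. $SM(\mathcal{G})$, the set of standard monomials, is the set of multilinear monomials (each variable with exponent $0$ or $1$) not lying in the ideal generated by $\{LM(f):f\in I\}$. *)

From HB Require Import structures.
From mathcomp Require Import all_boot all_order all_algebra.
Set Implicit Arguments. Unset Strict Implicit. Unset Printing Implicit Defensive.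
Import GRing.Theory.
Local Open Scope ring_scope.

(* Participants P_1..P_n are 'I_n (P_{i+1} <-> i).  Variables of the Boolean
   ring B(X_1..X_n,Y_1..Y_n): inl i = X_{i+1}, inr i = Y_{i+1}. *)
Definition bvar (n : nat) := ('I_n + 'I_n)%type.

(* A multilinear monomial is the set of variables occurring in it. *)
Definition bmon (n : nat) := {set bvar n}.

(* The Boolean polynomial ring B[X,Y]/<X_i^2-X_i, Y_i^2-Y_i>, represented by
   the (unique) multilinear representatives: coefficient functions on
   multilinear monomials, with coefficients in F_2. *)
Definition bpoly (n : nat) := {ffun bmon n -> 'F_2}.

(* multiplication: monomials multiply by union (since Z^2 = Z) *)
Definition bmul n (f g : bpoly n) : bpoly n :=
  [ffun S : bmon n => \sum_(A : bmon n) \sum_(B : bmon n | A :|: B == S) f A * g B].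
Definition bone n : bpoly n := [ffun S : bmon n => (S == set0)%:R].
Definition bconst n (c : 'F_2) : bpoly n := [ffun S : bmon n => if S == set0 then c else 0].
Definition bX n (v : bvar n) : bpoly n := [ffun S : bmon n => (S == [set v])%:R].
Definition bprod n (I : finType) (P : pred I) (F : I -> bpoly n) : bpoly n :=
  \big[@bmul n/bone n]_(i | P i) F i.

Definition xi n (blk : 'I_n -> bvar n) (S : {set 'I_n}) : bpoly n :=
  bprod xpredT (fun i : 'I_n => bone n + bX (blk i) + bconst n (i \in S)%:R).

Definition xiFam n (blk : 'I_n -> bvar n) (Q : {set {set 'I_n}}) : bpoly n :=
  bprod (mem Q) (fun A => xi blk A + bone n).

Definition sigma n : bpoly n :=
  bprod xpredT (fun i : 'I_n => bmul (bX (inl i)) (bX (inr i)) + bone n).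

Definition in_ideal3 n (g1 g2 g3 f : bpoly n) : bool :=
  [exists h : bpoly n * bpoly n * bpoly n,
     f == bmul h.1.1 g1 + bmul h.1.2 g2 + bmul h.2 g3].

(* Monomial order: lex, block Y < block X, X_n < ... < X_1, Y_n < ... < Y_1.
   rank: smaller rank = larger variable; X_1 has rank 0, Y_n rank 2n-1. *)
Definition vrank n (v : bvar n) : nat :=
  match v with inl i => val i | inr i => (n + val i)%N end.

Definition lexlt n (M1 M2 : bmon n) : bool :=
  [exists v : bvar n, (v \in M2) && (v \notin M1) &&
     [forall w : bvar n, (vrank w < vrank v)%N ==> ((w \in M1) == (w \in M2))]].

Definition is_LM n (f : bpoly n) (M : bmon n) : bool :=
  (f M != 0) && [forall M' : bmon n, (f M' != 0) ==> (M' == M) || lexlt M' M].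

(* monomial divisibility for multilinear monomials is inclusion *)
Definition mdvd n (L M : bmon n) : bool := L \subset M.

Definition is_groebner n (G : {set bpoly n}) (inI : pred (bpoly n)) : Prop :=
  (forall f : bpoly n,
      inI f <-> exists h : {ffun bpoly n -> bpoly n}, f = \sum_(g in G) bmul (h g) g)
  /\ (forall f : bpoly n, inI f -> f != 0 ->
        exists2 g, g \in G & exists L Lf, [/\ is_LM g L, is_LM f Lf & mdvd L Lf]).

(* standard monomials: multilinear monomials not in <LM(f) : f in I>
   (a monomial lies in a monomial ideal iff some generator divides it) *)
Definition SM n (inI : pred (bpoly n)) : {set bmon n} :=
  [set M : bmon n | ~~ [exists f : bpoly n, inI f && (f != 0) &&
                         [exists L : bmon n, is_LM f L && mdvd L M]]].

Definition fail_prone n (F : {set {set 'I_n}}) : Prop :=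
  forall A B, A \in F -> B \in F -> A \subset B -> A = B.

From mathcomp Require Import all_boot all_order all_algebra.
From mathcomp Require Import zify ring.
Import GRing.Theory.
Local Open Scope ring_scope.
Set Implicit Arguments. Unset Strict Implicit.

(* Evaluating at the 4^n points of B^(2n) identifies Boolean polynomials with
   functions, and since the generators only take the values 0 and 1, the ideal I
   contains every polynomial vanishing on its zero set V.  Hence the standard
   monomials, restricted to V, are linearly independent functions on V, so
   |SM| <= |V|.  A zero of xi_Q(X), xi_Q(Y) and sigma is exactly a pair of
   indicator vectors of quorums Q1, Q2 with Q1 and Q2 intersecting, so
   |Q|^2 = |SM| <= |V| <= #{(Q1, Q2) in Q^2 | Q1 :&: Q2 != set0}, which forces
   every pair to intersect. *)

Lemma F2_cases (x : 'F_2) : x = 0 \/ x = 1.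
Proof. by case: x => [[|[|]]] //= ?; [left | right]; apply/val_inj. Qed.

Lemma F2_neq0 (x : 'F_2) : x != 0 -> x = 1.
Proof. by case: (F2_cases x) => ->. Qed.

Lemma F2_natr_eqb (b c : bool) : (1 + b%:R + c%:R : 'F_2) = (b == c)%:R.
Proof. by case: b; case: c; apply/val_inj. Qed.

Lemma F2_natr_add1 (b : bool) : (b%:R + 1 : 'F_2) = (~~ b)%:R.
Proof. by case: b; apply/val_inj. Qed.

Lemma F2_natr_eq0 (b : bool) : (b%:R == 0 :> 'F_2) = ~~ b.
Proof. by case: b. Qed.

Lemma sumr_if_eq (I : finType) (R : nmodType) (P : pred I) (i0 : I) (c : R) :
  \sum_(i | P i) (if i == i0 then c else 0) = if P i0 then c else 0.
Proof.
rewrite -big_mkcondr; case: ifP => Pi0.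
  by apply: (big_pred1 i0) => i /=; rewrite andbC; case: eqP => // ->.
by rewrite big_pred0 // => i /=; rewrite andbC; case: eqP => // ->.
Qed.

Lemma prodr_bool (R : nzSemiRingType) (I : finType) (P B : pred I) :
  \prod_(i | P i) (B i)%:R = [forall (i | P i), B i]%:R :> R.
Proof.
rewrite -big_andE; elim/big_rec2: _ => // i b x _ ->.
by case: (B i); case: b; rewrite ?mul1r ?mul0r.
Qed.

Section Evaluation.
Variable n : nat.
Implicit Types (f g : bpoly n) (a : bmon n).

(* A point of B^(2n) is encoded by the set of variables it sets to 1; a
   multilinear monomial then evaluates to 1 exactly when it is contained in it. *)
Definition ev f a : 'F_2 := \sum_(S : bmon n | S \subset a) f S.

Lemma ev_one a : ev (bone n) a = 1.
Proof.
rewrite /ev (eq_bigr (fun S => if S == set0 then 1 else 0)) ?sumr_if_eq ?sub0set //.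
by move=> S _; rewrite ffunE; case: eqP.
Qed.

Lemma ev_const c a : ev (bconst n c) a = c.
Proof.
rewrite /ev (eq_bigr (fun S => if S == set0 then c else 0)) ?sumr_if_eq ?sub0set //.
by move=> S _; rewrite ffunE.
Qed.

Lemma ev_X v a : ev (bX v) a = (v \in a)%:R.
Proof.
rewrite /ev (eq_bigr (fun S => if S == [set v] then 1 else 0)) ?sumr_if_eq ?sub1set.
  by case: (v \in a).
by move=> S _; rewrite ffunE; case: eqP.
Qed.

Lemma ev_add f g a : ev (f + g) a = ev f a + ev g a.
Proof. by rewrite /ev -big_split; apply: eq_bigr => S _; rewrite ffunE. Qed.

Lemma ev_sub f g a : ev (f - g) a = ev f a - ev g a.
Proof. by rewrite /ev -sumrB; apply: eq_bigr => S _; rewrite !ffunE. Qed.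

Lemma ev_mul f g a : ev (bmul f g) a = ev f a * ev g a.
Proof.
rewrite /ev big_distrlr /=.
rewrite (eq_bigr (fun S => \sum_A \sum_B if A :|: B == S then f A * g B else 0));
  last by move=> S _; rewrite ffunE; apply: eq_bigr => A _; rewrite big_mkcond.
rewrite exchange_big [RHS]big_mkcond; apply: eq_bigr => A _.
rewrite exchange_big (eq_bigr (fun B => if A :|: B \subset a then f A * g B else 0));
  last by move=> B _; rewrite -(sumr_if_eq (fun S : bmon n => S \subset a));
          apply: eq_bigr => S _; rewrite eq_sym.
case: ifP => Aa.
  by rewrite [RHS]big_mkcond; apply: eq_bigr => B _; rewrite subUset Aa.
by rewrite big1 // => B _; rewrite subUset Aa.
Qed.

Lemma ev_prod (I : finType) (P : pred I) (F : I -> bpoly n) a :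
  ev (bprod P F) a = \prod_(i | P i) ev (F i) a.
Proof. exact: (big_morph (ev^~ a) (fun f g => ev_mul f g a) (ev_one a)). Qed.

(* A minimal monomial S of f survives at the point S, since all the other
   monomials below S vanish. *)
Lemma ev_eq0 f : (forall a, ev f a = 0) -> f = 0.
Proof.
move=> f0; apply/ffunP => S0; rewrite ffunE; apply/eqP/negPn/negP => fS0.
case: (@arg_minnP _ S0 (fun S => f S != 0) (fun S : bmon n => #|S|) fS0) => S fS Smin.
suff: ev f S = f S by rewrite f0 => /esym/eqP; rewrite (negbTE fS).
rewrite /ev (bigD1 S) //= big1 ?addr0 // => T /andP[TS TneS].
apply/eqP/negPn/negP => fT; have := Smin T fT; rewrite leqNgt => /negP; apply.
by apply: proper_card; rewrite properEneq TneS TS.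
Qed.

Lemma ev_inj f g : (forall a, ev f a = ev g a) -> f = g.
Proof.
move=> fg; apply/eqP; rewrite -subr_eq0; apply/eqP/ev_eq0 => a.
by rewrite ev_sub fg subrr.
Qed.
End Evaluation.

Section LexOrder.
Variable n : nat.
Implicit Types M : bmon n.

Lemma vrank_inj : injective (@vrank n).
Proof.
move=> [i|i] [j|j] /= e.
- by congr inl; apply: val_inj.
- by have := ltn_ord i; lia.
- by have := ltn_ord j; lia.
- by congr inr; apply: val_inj => /=; lia.
Qed.

Lemma lexlt_irr M : ~~ lexlt M M.
Proof. by apply/existsP => -[v /andP[/andP[->]]]. Qed.

Lemma lexlt_trans M1 M2 M3 : lexlt M1 M2 -> lexlt M2 M3 -> lexlt M1 M3.
Proof.
move=> /existsP[v /andP[/andP[v2 v1] /forallP hv]].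
move=> /existsP[w /andP[/andP[w3 w2] /forallP hw]].
case: (ltngtP (vrank v) (vrank w)) => c.
- apply/existsP; exists v; rewrite v1 andbT.
  have := hw v; rewrite c /= => /eqP <-; rewrite v2 /=.
  apply/forallP => u; apply/implyP => cu.
  have := hv u; rewrite cu /= => /eqP ->.
  by have := hw u; rewrite (ltn_trans cu c) /= => /eqP ->.
- apply/existsP; exists w; rewrite w3 /=.
  have := hv w; rewrite c /= => /eqP ->; rewrite w2 /=.
  apply/forallP => u; apply/implyP => cu.
  have := hw u; rewrite cu /= => /eqP <-.
  by have := hv u; rewrite (ltn_trans cu c) /= => /eqP ->.
- by move: (vrank_inj c) v2 w2 => -> ->.
Qed.

(* The witness is the variable of least rank in the symmetric difference. *)
Lemma lexlt_total M1 M2 : M1 != M2 -> lexlt M1 M2 || lexlt M2 M1.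
Proof.
move=> ne; pose D := (M1 :\: M2) :|: (M2 :\: M1).
have [v0 v0D] : exists v, v \in D.
  apply/existsP; apply: contraNT ne => /existsPn D0.
  by apply/eqP/setP => v; have := D0 v; rewrite !inE; case: (v \in M1); case: (v \in M2).
case: (arg_minnP (@vrank n) v0D) => v vD vmin.
have agree M M' : M \in [:: M1; M2] -> M' \in [:: M1; M2] ->
    [forall w, (vrank w < vrank v)%N ==> ((w \in M) == (w \in M'))].
  move=> MM M'M; apply/forallP => w; apply/implyP => wv; apply: contraTT wv => wD.
  rewrite -leqNgt; apply: vmin; change (w \in D); rewrite !inE.
  by move: MM M'M wD; rewrite !inE => /orP[]/eqP-> /orP[]/eqP->;
     case: (w \in M1); case: (w \in M2).
have: v \in D := vD; rewrite !inE => /orP[]/andP[vM2 vM1].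
- by apply/orP; right; apply/existsP; exists v; rewrite vM1 vM2 agree ?inE ?eqxx ?orbT.
- by apply/orP; left; apply/existsP; exists v; rewrite vM1 vM2 agree ?inE ?eqxx ?orbT.
Qed.

Lemma exists_LM (f : bpoly n) : f != 0 -> exists L, is_LM f L.
Proof.
move=> nz; have [M0 fM0] : exists M, f M != 0.
  apply/existsP; apply: contraNT nz => /existsPn f0.
  by apply/eqP/ffunP => M; rewrite ffunE; apply/eqP; rewrite -[_ == _]negbK f0.
pose below M := #|[set M' | lexlt M' M]|.
case: (@arg_maxnP _ M0 (fun M => f M != 0) below fM0) => L fL Lmax.
exists L; rewrite /is_LM fL; apply/forallP => M; apply/implyP => fM.
case: (eqVneq M L) => //= ne; case/orP: (lexlt_total ne) => // LM.
have /= := Lmax M fM; rewrite leqNgt => /negP; case.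
apply: proper_card; apply/properP; split.
  by apply/subsetP => M'; rewrite !inE => /lexlt_trans; apply.
by exists L; rewrite !inE ?lexlt_irr.
Qed.
End LexOrder.

Section StandardMonomials.
Variable n : nat.
Variable inI : pred (bpoly n).

Lemma supported_on_SM_eq0 (f : bpoly n) :
  inI f -> (forall M, f M != 0 -> M \in SM inI) -> f = 0.
Proof.
move=> If fSM; apply/eqP/negPn/negP => nz; have [L LML] := exists_LM nz.
have := fSM L (andP LML).1; rewrite inE => /negP; apply.
by apply/existsP; exists f; rewrite If nz; apply/existsP; exists L; rewrite LML /mdvd subxx.
Qed.

Definition monsum (S : {set bmon n}) : bpoly n := [ffun M => (M \in S)%:R].

(* Over F_2 the polynomials supported on SM are the monsum S with S a subset
   of SM; restricting them to V is injective, whence 2^|SM| <= 2^|V|. *)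
Lemma card_SM_le (V : {set bmon n}) :
  (forall f, {in V, forall a, ev f a = 0} -> inI f) -> (#|SM inI| <= #|V|)%N.
Proof.
move=> vanish_inI.
pose restr (S : {set bmon n}) := [set a in V | ev (monsum S) a != 0].
have restr_inj : {in powerset (SM inI) &, injective restr}.
  move=> S T; rewrite !inE => SSM TSM eST.
  have ST0 : monsum S - monsum T = 0.
    apply: supported_on_SM_eq0.
      apply: vanish_inI => a aV; move/setP/(_ a): eST; rewrite !inE aV ev_sub /=.
      by case: (F2_cases (ev (monsum S) a)) => ->;
         case: (F2_cases (ev (monsum T) a)) => ->; rewrite ?subrr.
    move=> M; rewrite !ffunE; case: (boolP (M \in S)) => [/(subsetP SSM)//|_].
    by case: (boolP (M \in T)) => [/(subsetP TSM)//|_]; rewrite subrr eqxx.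
  apply/setP => M; move/ffunP/(_ M): ST0; rewrite !ffunE => /eqP; rewrite subr_eq0.
  by case: (M \in S); case: (M \in T).
rewrite -(leq_exp2l _ _ (ltnSn 1)) -!card_powerset -(card_in_imset restr_inj).
apply/subset_leq_card/subsetP => _ /imsetP[S _ ->].
by rewrite inE; apply/subsetP => a; rewrite inE => /andP[].
Qed.
End StandardMonomials.

Section WeakNullstellensatz.
Variable n : nat.
Variables g1 g2 g3 : bpoly n.

Definition zeros3 : {set bmon n} :=
  [set a | [&& ev g1 a == 0, ev g2 a == 0 & ev g3 a == 0]].

(* f = f g1 + f (1 - g1) g2 + f (1 - g1) (1 - g2) g3 holds at every point:
   on zeros3 because f vanishes there, elsewhere because some g_i is 1. *)
Lemma vanishing_in_ideal3 (f : bpoly n) :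
  {in zeros3, forall a, ev f a = 0} -> in_ideal3 g1 g2 g3 f.
Proof.
move=> f0; pose h2 := bmul f (bone n - g1); pose h3 := bmul h2 (bone n - g2).
apply/existsP; exists (f, h2, h3); apply/eqP/ev_inj => a.
rewrite /= !ev_add !ev_mul !ev_sub !ev_one.
case: (boolP (a \in zeros3)) => [/f0 -> | ]; first by rewrite !mul0r !addr0.
by rewrite inE !negb_and => /or3P[] /F2_neq0 ->; ring.
Qed.
End WeakNullstellensatz.

Section QuorumZeros.
Variable n : nat.
Variable Q : {set {set 'I_n}}.

Definition blkset (blk : 'I_n -> bvar n) (a : bmon n) : {set 'I_n} :=
  [set i | blk i \in a].

Lemma ev_xi blk A a : ev (xi blk A) a = (A == blkset blk a)%:R.
Proof.
rewrite /xi ev_prod; under eq_bigr do rewrite !ev_add ev_one ev_X ev_const F2_natr_eqb.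
rewrite prodr_bool; congr ((nat_of_bool _)%:R); apply/forallP/eqP => [eqA | -> i].
  by apply/setP => i; rewrite inE; apply/esym/eqP; exact: eqA.
by rewrite inE eqxx.
Qed.

Lemma ev_xiFam blk a : ev (xiFam blk Q) a = (blkset blk a \notin Q)%:R.
Proof.
rewrite /xiFam ev_prod; under eq_bigr do rewrite ev_add ev_xi ev_one F2_natr_add1.
rewrite prodr_bool; congr ((nat_of_bool _)%:R); apply/forallP/idP => [AQ | nQ A].
  by apply/negP => Qa; have /implyP/(_ Qa) := AQ (blkset blk a); rewrite eqxx.
by apply/implyP => AQ; apply: contraNneq nQ => <-.
Qed.

Lemma ev_sigma a : ev (sigma n) a = (blkset inl a :&: blkset inr a == set0)%:R.
Proof.
rewrite /sigma ev_prod.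
under eq_bigr do rewrite ev_add ev_mul !ev_X ev_one -natrM mulnb F2_natr_add1.
rewrite prodr_bool; congr ((nat_of_bool _)%:R); apply/forallP/eqP => [disj | disj i].
  by apply/setP => i; rewrite !inE; apply/negbTE/disj.
by move/setP/(_ i): disj; rewrite !inE => ->.
Qed.

Lemma card_zeros3_le :
  (#|zeros3 (xiFam inl Q) (xiFam inr Q) (sigma n)|
     <= #|[set p in setX Q Q | p.1 :&: p.2 != set0]|)%N.
Proof.
pose psi a := (blkset inl a, blkset inr a).
have psi_inj : injective psi.
  move=> a b [ea eb]; apply/setP => -[i|i];
    [move/setP/(_ i): ea | move/setP/(_ i): eb]; by rewrite !inE.
rewrite -(card_imset _ psi_inj); apply/subset_leq_card/subsetP => _ /imsetP[a + ->].
by rewrite !inE ev_xiFam ev_xiFam ev_sigma !F2_natr_eq0 !negbK => /and3P[-> -> ->].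
Qed.
End QuorumZeros.

Theorem mainTheorem1 (n : nat) (Q F : {set {set 'I_n}}) (G : {set bpoly n}) :
  fail_prone F ->
  is_groebner G (in_ideal3 (xiFam (@inl _ _) Q) (xiFam (@inr _ _) Q) (sigma n)) ->
  #|SM (in_ideal3 (xiFam (@inl _ _) Q) (xiFam (@inr _ _) Q) (sigma n))| = (#|Q| ^ 2)%N ->
  forall Q1 Q2, Q1 \in Q -> Q2 \in Q -> Q1 :&: Q2 != set0.
Proof.
move=> _ _ card_SM Q1 Q2 Q1Q Q2Q; apply/negP => /eqP disj.
have := card_SM_le (@vanishing_in_ideal3 n (xiFam inl Q) (xiFam inr Q) (sigma n)).
rewrite card_SM => /leq_trans/(_ (card_zeros3_le Q)).
suff: (#|[set p in setX Q Q | p.1 :&: p.2 != set0]| < #|Q| ^ 2)%N.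
  by rewrite ltnNge => /negP.
rewrite -mulnn -cardsX; apply: proper_card; apply/properP; split.
  by apply/subsetP => p; rewrite inE => /andP[].
by exists (Q1, Q2); rewrite !inE /= ?Q1Q ?Q2Q ?disj ?eqxx.
Qed.
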